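(* Consider a SOCO problem with norm $\|\cdot\|$, let $\theta\ge1$ and $N(\cdot)=\theta\|\cdot\|$. Then the expected operating cost of RBG($N$) satisfies $\mathbb{E}[OC(RBG(N))]\le OPT_N$.
   Context: The decision space $F\subseteq(\mathbb{R}^+)^n$ is convex and compact, $\|\cdot\|$ is a norm on $\mathbb{R}^n$, and the cost functions $c^t:F\to\mathbb{R}^+$ are convex with uniformly bounded subgradients. Algorithm RBG($N$): define $w^0(x)=N(x)$ and $w^t(x)=\min_{y\in F}\{w^{t-1}(y)+c^t(y)+N(x-y)\}$; draw $r$ uniformly at random from $(-1,1)$ once; at each time $t$ choose $x^t\in F$ minimizing $Y^t(x)=w^{t-1}(x)+rN(x)$ (so $x^{t+1}$ is chosen after seeing $c^t$). Operating cost: $OC(RBG(N))=\sum_{t=1}^Tc^t(x^{t+1})$. $OPT_N=\min_{(x^1,\dots,x^T)\in F^T}\sum_{t=1}^Tc^t(x^t)+N(x^t-x^{t-1})$ with $x^0=0$. The expectation is over $r$. *)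

From HB Require Import structures.
From mathcomp Require Import all_boot all_order all_algebra.
From mathcomp Require Import all_classical all_reals all_analysis.
Set Implicit Arguments. Unset Strict Implicit. Unset Printing Implicit Defensive.
Import Order.TTheory GRing.Theory Num.Theory.
Import numFieldNormedType.Exports.
Local Open Scope classical_set_scope.
Local Open Scope ring_scope.

Definition is_norm (R : realType) (n : nat) (nrm : 'rV[R]_n -> R) : Prop :=
  [/\ (forall x, 0 <= nrm x),
      (forall x, nrm x = 0 -> x = 0),
      (forall (a : R) x, nrm (a *: x) = `|a| * nrm x) &
      (forall x y, nrm (x + y) <= nrm x + nrm y)].

Definition convex_on (R : realType) (n : nat) (F : set 'rV[R]_n)
    (f : 'rV[R]_n -> R) : Prop :=
  forall x y (l : R), F x -> F y -> 0 <= l <= 1 ->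
    f (l *: x + (1 - l) *: y) <= l * f x + (1 - l) * f y.

Definition dotv (R : realType) (n : nat) (g v : 'rV[R]_n) : R :=
  \sum_(i < n) g 0 i * v 0 i.

Definition subgradient (R : realType) (n : nat) (F : set 'rV[R]_n)
    (f : 'rV[R]_n -> R) (x g : 'rV[R]_n) : Prop :=
  forall y, F y -> f x + dotv g (y - x) <= f y.

Fixpoint work (R : realType) (n : nat) (F : set 'rV[R]_n)
    (N : 'rV[R]_n -> R) (c : nat -> 'rV[R]_n -> R) (t : nat) (x : 'rV[R]_n) : R :=
  match t with
  | 0 => N x
  | t'.+1 => inf [set work F N c t' y + c t y + N (x - y) | y in F]
  end.

Definition rbg_OC (R : realType) (n : nat) (c : nat -> 'rV[R]_n -> R)
    (T : nat) (X : R -> nat -> 'rV[R]_n) (r : R) : R :=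
  \sum_(1 <= t < T.+1) c t (X r t.+1).

(* Total cost (operating + switching with N) of a schedule y with y 0 = 0. *)
Definition sched_cost (R : realType) (n : nat) (c : nat -> 'rV[R]_n -> R)
    (N : 'rV[R]_n -> R) (T : nat) (y : nat -> 'rV[R]_n) : R :=
  \sum_(1 <= t < T.+1) (c t (y t) + N (y t - y t.-1)).

Definition open_m1_1 (R : realType) : set R := `](-1 : R), 1[%classic.

From HB Require Import structures.
From mathcomp Require Import all_boot all_order all_algebra.
From mathcomp Require Import all_classical all_reals all_analysis.
From mathcomp Require Import ring lra.
From mathcomp Require Import measurable_realfun.
Import Order.TTheory GRing.Theory Num.Theory.
Import numFieldNormedType.Exports.
Local Open Scope classical_set_scope.
Local Open Scope ring_scope.

Set Implicit Arguments.
Unset Strict Implicit.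

(** Fix [r] with [|r| < 1] and write [w^t] for the work function. Since
[x^(t+1)] minimizes [w^t + r N] and [|r| < 1], every near-minimizer [y] of the
infimum defining [w^t(x^(t+1))] is close to [x^(t+1)]; as [c^t] (bounded
subgradients) and [w^(t-1)] are Lipschitz, this yields
[c^t(x^(t+1)) <= w^t(x^(t+1)) - w^(t-1)(x^(t+1))]. By minimality of [x^t] for
[w^(t-1) + r N] the operating cost then telescopes to at most
[w^T(y^T) + r N(y^T) <= cost(y) + r N(y^T)] for every schedule [y]. This bound
is affine in [r], so its average over (-1, 1) is [cost(y)]. *)

Definition minimizes_on (T : Type) (R : numDomainType) (A : set T)
    (f : T -> R) (x : T) : Prop :=
  A x /\ forall y, A y -> f x <= f y.

Lemma measurable_affine_EFin (R : realType) (a b : R) :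
  measurable_fun (@open_m1_1 R) (fun r : R => ((a + r * b)%:E : \bar R)).
Proof.
apply/measurable_EFinP; apply: measurable_funD => //.
exact: measurable_funM.
Qed.

Lemma integral_affine_m1_1 (R : realType) (a b : R) :
  (\int[@lebesgue_measure R]_(r in @open_m1_1 R) ((a + r * b)%:E) = (2 * a)%:E)%E.
Proof.
pose F (x : R) := a * x + b * (x ^+ 2 / 2).
have dF x : is_derive x (1 : R) F (a + x * b).
  apply: is_derive_eq; rewrite !scaler0 add0r.
  have scaleE (u v : R) : u *: v = u * v by [].
  by rewrite !scaleE mulr1; field.
have cF x : {for x, continuous F}.
  by apply/differentiable_continuous; rewrite -derivable1_diffP; exact: ex_derive.
rewrite /open_m1_1 -(@integral_itv_bndoo _ _ _ _ true false); last first.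
  exact: measurable_affine_EFin.
rewrite (@continuous_FTC2 _ _ F) //.
- by congr (_%:E); rewrite /F sqrrN expr1n; field.
- apply: continuous_in_subspaceT => x _.
  by apply: cvgD; [exact: cvg_cst | apply: cvgM; [exact: cvg_id | exact: cvg_cst]].
- split; first by move=> x _; exact: ex_derive.
  + exact/cvg_at_right_filter/cF.
  + exact/cvg_at_left_filter/cF.
- by move=> x _; rewrite derive1E derive_val.
Qed.

Lemma ler_norm_rV_coord (R : realType) (n : nat) (v : 'rV[R]_n) i :
  `|v 0 i| <= `|v|.
Proof.
rewrite [leRHS]/Num.Def.normr /= mx_normrE.
exact: le_trans (le_bigmax _ _ (0, i)).
Qed.

Lemma is_normZ (R : realType) (n : nat) (nrm : 'rV[R]_n -> R) (a : R) :
  is_norm nrm -> 0 < a -> is_norm (fun v => a * nrm v).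
Proof.
move=> [nrm_ge0 nrm_eq0 nrmZ nrmD] a_gt0; split.
- by move=> x; rewrite mulr_ge0 // ltW.
- by move=> x /eqP; rewrite mulf_eq0 gt_eqF //= => /eqP /nrm_eq0.
- by move=> l x; rewrite nrmZ mulrCA.
- by move=> x y; rewrite -mulrDr ler_wpM2l // ltW.
Qed.

Section IsNorm.
Variables (R : realType) (n : nat) (nrm : 'rV[R]_n -> R).
Hypothesis nrmP : is_norm nrm.

Lemma nrm0 : nrm 0 = 0.
Proof.
by case: nrmP => _ _ nrmZ _; rewrite -(scale0r (0 : 'rV[R]_n)) nrmZ normr0 mul0r.
Qed.

Lemma nrmN v : nrm (- v) = nrm v.
Proof. by case: nrmP => _ _ nrmZ _; rewrite -scaleN1r nrmZ normrN1 mul1r. Qed.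

Lemma ler_nrm_sum (I : Type) (s : seq I) (f : I -> 'rV[R]_n) :
  nrm (\sum_(i <- s) f i) <= \sum_(i <- s) nrm (f i).
Proof.
case: nrmP => _ _ _ nrmD.
elim/big_rec2: _ => [|i y1 y2 _ IH]; first by rewrite nrm0.
exact: le_trans (nrmD _ _) (lerD (lexx _) IH).
Qed.

Lemma ler_nrm_sub x y : nrm x <= nrm y + nrm (x - y).
Proof.
by case: nrmP => _ _ _ nrmD; apply: le_trans (nrmD _ _); rewrite addrC subrK.
Qed.

Lemma ler_dist_nrm x y : `|nrm x - nrm y| <= nrm (x - y).
Proof.
have := ler_nrm_sub x y; have := ler_nrm_sub y x.
rewrite -opprB nrmN ler_norml => h1 h2; apply/andP; split; lra.
Qed.

Lemma nrm_le_mx_norm v : nrm v <= (\sum_i nrm (delta_mx 0 i)) * `|v|.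
Proof.
case: nrmP => nrm_ge0 _ nrmZ _.
rewrite {1}(row_sum_delta v) mulr_suml; apply: le_trans (ler_nrm_sum _ _) _.
apply: ler_sum => i _; rewrite nrmZ mulrC.
by apply: ler_wpM2l; [exact: nrm_ge0 | exact: ler_norm_rV_coord].
Qed.

Lemma nrm_continuous : continuous nrm.
Proof.
move=> x; have nbhs_proper : ProperFilter (nbhs x) by exact: nbhs_pfilter.
apply/cvgrPdist_le => e e_gt0.
set K := \sum_i nrm (delta_mx (0 : 'I_1) i).
have K_ge0 : 0 <= K by apply: sumr_ge0 => i _; case: nrmP.
have d_gt0 : 0 < e / (K + 1) by rewrite divr_gt0 // ltr_wpDl.
near=> z.
apply: le_trans (ler_dist_nrm _ _) _; apply: le_trans (nrm_le_mx_norm _) _.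
have : `|x - z| <= e / (K + 1).
  by near: z; exact: (@cvgr_dist_le _ _ _ (nbhs x) _ id x cvg_id _ d_gt0).
rewrite ler_pdivlMr ?ltr_wpDl // -/K.
have := normr_ge0 (x - z); nra.
Unshelve. all: by end_near. Qed.

(** [nrm] attains a positive minimum on the compact unit sphere of the sup
norm. *)
Lemma mx_norm_le_nrm : exists2 k : R, 0 < k & forall v, `|v| <= k * nrm v.
Proof.
have [nrm_ge0 nrm_eq0 nrmZ _] := nrmP.
have [[w w_neq0]|] := pselect (exists v : 'rV[R]_n, v != 0); last first.
  move=> no_nonzero; exists 1 => // v.
  have -> : v = 0 by apply: contra_notP no_nonzero => /eqP v_neq0; exists v.
  by rewrite normr0 mul1r.
pose S := [set v : 'rV[R]_n | `|v| = 1].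
have normalize_in_S v : v != 0 -> S (`|v|^-1 *: v).
  by move=> v_neq0; rewrite /S /= normrZ normfV normr_id mulVf // normr_eq0.
have S_compact : compact S.
  apply: bounded_closed_compact.
    by exists 1; split => // M M1 v /= ->; exact: ltW.
  apply: (@preimage_closed _ _ (fun v : 'rV[R]_n => `|v|) [set 1]).
    by move=> v _; exact: norm_continuous.
  exact: closed_eq.
have [u /set_mem Su u_min] := EVT_min_rV (ex_intro _ _ (normalize_in_S w w_neq0))
  S_compact (continuous_subspaceT nrm_continuous).
have nrm_u_gt0 : 0 < nrm u.
  rewrite lt_neqAle nrm_ge0 andbT eq_sym; apply/negP => /eqP /nrm_eq0 u0.
  by move: Su; rewrite /S /= u0 normr0 => /eqP; rewrite eq_sym oner_eq0.
exists (nrm u)^-1; first by rewrite invr_gt0.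
move=> v; have [->|v_neq0] := eqVneq v 0; first by rewrite normr0 nrm0 mulr0.
have := u_min _ (mem_set (normalize_in_S _ v_neq0)).
rewrite nrmZ normfV normr_id ler_pdivlMl ?normr_gt0 // => h.
by rewrite ler_pdivlMl // mulrC.
Qed.

End IsNorm.

Section WorkFunction.
Variables (R : realType) (n : nat) (F : set 'rV[R]_n) (N : 'rV[R]_n -> R)
  (c : nat -> 'rV[R]_n -> R).
Hypotheses (F_neq0 : F !=set0) (NP : is_norm N)
  (c_ge0 : forall t x, F x -> 0 <= c t x).

Let W := work F N c.

Let N_ge0 v : 0 <= N v. Proof. by case: NP. Qed.

Lemma work_ge0 t x : 0 <= W t x.
Proof.
elim: t x => [|t IH] x /=; first exact: N_ge0.
have [y Fy] := F_neq0.
apply: lb_le_inf; first by exists (W t y + c t.+1 y + N (x - y)), y.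
by move=> _ [z Fz <-]; rewrite !addr_ge0 ?c_ge0.
Qed.

Lemma has_inf_work_step t x :
  has_inf [set W t y + c t.+1 y + N (x - y) | y in F].
Proof.
have [y Fy] := F_neq0; split; first by exists (W t y + c t.+1 y + N (x - y)), y.
by exists 0 => _ [z Fz <-]; rewrite !addr_ge0 ?c_ge0 ?work_ge0.
Qed.

Lemma work_le t x y : F y -> W t.+1 x <= W t y + c t.+1 y + N (x - y).
Proof. by move=> Fy; apply: (ge_inf (has_inf_work_step t x).2); exists y. Qed.

Lemma work_approx t x (e : R) : 0 < e ->
  exists2 y, F y & W t y + c t.+1 y + N (x - y) < W t.+1 x + e.
Proof.
move=> e_gt0; have [_ [y Fy <-]] := inf_adherent e_gt0 (has_inf_work_step t x).
by exists y.
Qed.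

Lemma work_succ_le t x : F x -> W t.+1 x <= W t x + c t.+1 x.
Proof. by move=> Fx; rewrite -[leRHS]addr0 -(nrm0 NP) -(subrr x) work_le. Qed.

Lemma work_lipschitz t x y : W t x <= W t y + N (x - y).
Proof.
case: t => [|t]; first exact: ler_nrm_sub.
rewrite -lerBlDr; apply: lb_le_inf; first exact: (has_inf_work_step t y).1.
move=> _ [z Fz <-]; rewrite lerBlDr.
change (W t.+1 x <= W t z + c t.+1 z + N (y - z) + N (x - y)).
apply: le_trans (work_le t x Fz) _.
have := ler_nrm_sub NP (x - z) (y - z); rewrite opprB addrA subrK.
rewrite -!addrA lerD2l; lra.
Qed.

Lemma work_le_sched_cost T (y : nat -> 'rV[R]_n) : y 0%N = 0 ->
  (forall t, (1 <= t <= T)%N -> F (y t)) -> W T (y T) <= sched_cost c N T y.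
Proof.
move=> y0 Fy; rewrite /sched_cost.
elim: T Fy => [|T IH] Fy; first by rewrite big_geq // /W /= y0 (nrm0 NP).
rewrite big_nat_recr //=.
have FyT : F (y T.+1) by apply: Fy; rewrite leqnn.
have : W T (y T) <= \sum_(1 <= t < T.+1) (c t (y t) + N (y t - y t.-1)).
  by apply: IH => t /andP[t1 tT]; apply: Fy; rewrite t1 leqW.
have := work_succ_le T FyT; have := work_lipschitz T (y T.+1) (y T).
rewrite -/W; lra.
Qed.

Section Perturbed.
Variables (r L : R).
Hypotheses (r_lt1 : `|r| < 1) (L_ge0 : 0 <= L)
  (c_lipschitz : forall t u v, F u -> F v -> c t u <= c t v + L * N (u - v)).

Lemma near_minimizer_close t x y (d : R) :
  minimizes_on F (fun z => W t.+1 z + r * N z) x -> F y ->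
  W t y + c t.+1 y + N (x - y) <= W t.+1 x + d -> (1 - `|r|) * N (x - y) <= d.
Proof.
move=> [_ x_min] Fy y_approx.
have := x_min _ Fy; have := work_succ_le t Fy.
have : r * (N y - N x) <= `|r| * N (x - y).
  apply: le_trans (ler_norm _) _; rewrite normrM distrC.
  by apply: ler_wpM2l => //; exact: ler_dist_nrm.
rewrite mulrBl mul1r; lra.
Qed.

(** The approximation precision [e / M] is chosen so that the displacement
[N (x - y) <= e / M / (1 - |r|)] costs at most [e] in total. *)
Lemma cost_le_work_increment t x :
  minimizes_on F (fun z => W t.+1 z + r * N z) x -> c t.+1 x <= W t.+1 x - W t x.
Proof.
move=> x_min; have Fx := x_min.1.
have gap_gt0 : 0 < 1 - `|r| by rewrite subr_gt0.
set M := 1 + L / (1 - `|r|).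
have M_gt0 : 0 < M by rewrite ltr_wpDr // divr_ge0 // ltW.
rewrite lerBrDr; apply/ler_addgt0Pr => e e_gt0.
have [y Fy y_approx] := work_approx t x (divr_gt0 e_gt0 M_gt0).
have : N (x - y) <= e / M / (1 - `|r|).
  rewrite ler_pdivlMr // mulrC.
  exact: near_minimizer_close x_min Fy (ltW y_approx).
move=> /(ler_wpM2l L_ge0) close.
have split_e : e / M + L * (e / M / (1 - `|r|)) = e.
  by rewrite /M; field; rewrite !gt_eqF // ltr_wpDr.
have := c_lipschitz t.+1 Fx Fy; have := work_lipschitz t x y; lra.
Qed.

Section Run.
Variables (T : nat) (X : nat -> 'rV[R]_n).
Hypothesis X_min : forall t, (1 <= t <= T.+1)%N ->
  minimizes_on F (fun z => W t.-1 z + r * N z) (X t).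

Lemma sum_cost_le_telescope k : (k <= T)%N ->
  \sum_(1 <= t < k.+1) c t (X t.+1) <=
    (W k (X k.+1) + r * N (X k.+1)) - (W 0 (X 1) + r * N (X 1)).
Proof.
elim: k => [|k IH] kT; first by rewrite big_geq // subrr.
rewrite big_nat_recr //=.
have Xk2_min := @X_min k.+2 kT.
have [_ Xk1_min] := @X_min k.+1 (ltnW kT).
have := cost_le_work_increment Xk2_min; have := Xk1_min _ Xk2_min.1.
have := IH (ltnW kT); rewrite /=; lra.
Qed.

Lemma sum_cost_le_affine y :
  y 0%N = 0 -> (forall t, (1 <= t <= T)%N -> F (y t)) ->
  \sum_(1 <= t < T.+1) c t (X t.+1) <= sched_cost c N T y + r * N (y T).
Proof.
move=> y0 Fy.
have [T0|T_neq0] := eqVneq T 0%N.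
  by rewrite T0 /sched_cost !big_geq // y0 (nrm0 NP) mulr0 addr0.
have FyT : F (y T) by apply: Fy; rewrite lt0n T_neq0 leqnn.
have start_ge0 : 0 <= W 0 (X 1) + r * N (X 1).
  change (0 <= N (X 1) + r * N (X 1)).
  have := N_ge0 (X 1); move: r_lt1; rewrite ltr_norml => /andP[r_gtN1 _]; nra.
have [_ XT_min] := @X_min T.+1 (leqnn _).
have := sum_cost_le_telescope (leqnn T); have := XT_min _ FyT.
have := work_le_sched_cost y0 Fy; rewrite /=; lra.
Qed.

End Run.
End Perturbed.
End WorkFunction.

Lemma subgradient_le_mx_norm (R : realType) (n : nat) (F : set 'rV[R]_n)
    (f : 'rV[R]_n -> R) (x y g : 'rV[R]_n) (G : R) :
  subgradient F f x g -> (forall i, `|g 0 i| <= G) -> F y ->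
  f x <= f y + n%:R * G * `|x - y|.
Proof.
move=> g_sub g_bdd Fy.
have dot_le : `|dotv g (y - x)| <= n%:R * G * `|x - y|.
  have -> : n%:R * G * `|x - y| = \sum_(i < n) G * `|x - y|.
    by rewrite sumr_const card_ord -mulrA mulr_natl.
  apply: le_trans (ler_norm_sum _ _ _) _; apply: ler_sum => i _.
  rewrite normrM distrC.
  by apply: ler_pM => //; exact: ler_norm_rV_coord.
have := g_sub y Fy; have := ler_norm (- dotv g (y - x)); rewrite normrN; lra.
Qed.

Lemma bounded_subgradients_lipschitz (R : realType) (n : nat) (F : set 'rV[R]_n)
    (N : 'rV[R]_n -> R) (c : nat -> 'rV[R]_n -> R) :
  is_norm N ->
  (exists G : R, forall t x, F x ->
     exists g, subgradient F (c t) x g /\ forall i, `|g 0 i| <= G) ->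
  exists2 L, 0 <= L & forall t u v, F u -> F v -> c t u <= c t v + L * N (u - v).
Proof.
move=> NP [G c_subgrad]; have [k k_gt0 mx_le_N] := mx_norm_le_nrm NP.
have G'_ge0 : 0 <= Num.max G 0 by rewrite le_max lexx orbT.
exists (n%:R * Num.max G 0 * k) => [|t u v Fu Fv].
  by rewrite !mulr_ge0 // ltW.
have [g [g_sub g_bdd]] := c_subgrad t u Fu.
have g_bdd' i : `|g 0 i| <= Num.max G 0.
  by apply: le_trans (g_bdd i) _; rewrite le_max lexx.
apply: le_trans (subgradient_le_mx_norm g_sub g_bdd' Fv) _.
rewrite lerD2l -[leRHS]mulrA; apply: ler_wpM2l; [exact: mulr_ge0 | exact: mx_le_N].
Qed.

Unset Implicit Arguments.

Theorem lemma4 (R : realType) (n : nat) (F : set 'rV[R]_n)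
    (nrm : 'rV[R]_n -> R) (theta : R) (T : nat)
    (c : nat -> 'rV[R]_n -> R) (X : R -> nat -> 'rV[R]_n) :
  (* decision space: convex, compact, in the nonnegative orthant *)
  convex_set F -> compact F -> (forall x, F x -> forall i, 0 <= x 0 i) ->
  (* the norm and N = theta * norm with theta >= 1 *)
  is_norm nrm -> 1 <= theta ->
  (* cost functions: nonnegative, convex, uniformly bounded subgradients *)
  (forall t x, F x -> 0 <= c t x) ->
  (forall t, convex_on F (c t)) ->
  (exists G : R, forall t x, F x ->
     exists g, subgradient F (c t) x g /\ forall i, `|g 0 i| <= G) ->
  (* RBG(N): for each r in (-1,1), X r t is in F and minimizes
     Y^t(x) = w^{t-1}(x) + r N(x), for t = 1, ..., T+1 *)
  (forall r, -1 < r < 1 -> forall t, (1 <= t <= T.+1)%N ->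
     F (X r t) /\
     forall y, F y ->
       work F (fun v => theta * nrm v) c t.-1 (X r t) + r * (theta * nrm (X r t))
       <= work F (fun v => theta * nrm v) c t.-1 y + r * (theta * nrm y)) ->
  (* the operating cost is a measurable function of r (so that E is defined) *)
  measurable_fun ((@open_m1_1 R)) (rbg_OC c T X) ->
  (* E[OC(RBG(N))] <= OPT_N, i.e. <= the cost of every schedule in F^T *)
  forall y : nat -> 'rV[R]_n, y 0%N = 0 -> (forall t, (1 <= t <= T)%N -> F (y t)) ->
    (((2:R)^-1)%:E * \int[lebesgue_measure]_(r in (@open_m1_1 R)) (rbg_OC c T X r)%:E
      <= (sched_cost c (fun v => theta * nrm v) T y)%:E)%E.
Proof.
move=> _ _ _ nrmP theta_ge1 c_ge0 _ c_subgrad X_rbg OC_meas y y0 Fy.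
pose N v := theta * nrm v; pose S := sched_cost c N T y.
have NP : is_norm N := is_normZ nrmP (lt_le_trans ltr01 theta_ge1).
have [L L_ge0 c_lip] := bounded_subgradients_lipschitz NP c_subgrad.
have F_neq0 : F !=set0.
  by exists (X 0 1%N); apply: (X_rbg 0 _ 1%N isT).1; rewrite oppr_lt0 ltr01.
have X_rbg_in r : open_m1_1 r -> forall t, (1 <= t <= T.+1)%N ->
    minimizes_on F (fun z => work F N c t.-1 z + r * N z) (X r t).
  by rewrite /open_m1_1 /= in_itv /=; exact: X_rbg.
have OC_ge0 r : open_m1_1 r -> 0 <= rbg_OC c T X r.
  move=> r_in; rewrite /rbg_OC big_nat_cond; apply: sumr_ge0 => t.
  by case/andP=> /andP[_ tT] _; apply: c_ge0; exact: (X_rbg_in r r_in t.+1 tT).1.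
have OC_le r : open_m1_1 r -> rbg_OC c T X r <= S + r * N (y T).
  move=> r_in; apply: (sum_cost_le_affine F_neq0 NP c_ge0 _ L_ge0 c_lip) => //.
  + by move: r_in; rewrite /open_m1_1 /= in_itv /= ltr_norml.
  + exact: X_rbg_in.
have int_le : (\int[lebesgue_measure]_(r in @open_m1_1 R) (rbg_OC c T X r)%:E
    <= (2 * S)%:E)%E.
  rewrite -(integral_affine_m1_1 _ (N (y T))); apply: ge0_le_integral.
  - exact: measurable_itv.
  - by move=> r r_in; rewrite lee_fin; exact: OC_ge0.
  - exact/measurable_EFinP.
  - exact: measurable_affine_EFin.
  - by move=> r r_in; rewrite lee_fin; exact: OC_le.
have -> : (S%:E = (2^-1)%:E * (2 * S)%:E)%E by rewrite -EFinM mulrA mulVf ?mul1r.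
by apply: lee_wpmul2l; rewrite // lee_fin invr_ge0.
Qed.
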